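(* Let $I^h\subset\mathbb{K}[S_M^h]$ be a homogeneous ideal, $G$ a sparse Gröbner basis of $I^h$ with respect to $\prec_h$ consisting of homogeneous polynomials, and $D\in\mathbb{N}$. Let $\mathcal{N}$ be the set of monomials $X^{(s,D)}\in\mathbb{K}[S_M^h]_D$ for which some $g\in G$ satisfies $\mathrm{LM}_{\prec_h}(g)\mid_\delta X^{(s,D)}$. Associate to each $X^{(s,D)}\in\mathcal{N}$ exactly one such $g$, and let $\mathcal{R}$ be the set of polynomials $X^t\cdot g$, where $X^{(s,D)}\in\mathcal{N}$, $g$ is its associated polynomial and $X^t$ is the monomial with $X^t\cdot\mathrm{LM}_{\prec_h}(g)=X^{(s,D)}$ and $\delta(X^t)+\delta(\mathrm{LM}_{\prec_h}(g))=\delta(X^{(s,D)})$. Let $\mathcal{M}'_D$ be the Macaulay matrix with columns indexed by all monomials of $\mathbb{K}[S_M^h]_D$ in decreasing order for $\prec_h$ and rows indexed by $\mathcal{R}$, and let $\mathcal{M}_D$ be the Macaulay matrix with the same columns and rows indexed by all products $X^{(u,D-\deg g)}\cdot g$ with $g\in G$ and $X^{(u,D-\deg g)}$ a monomial of $\mathbb{K}[S_M^h]_{D-\deg g}$. Let $\widetilde{\mathcal{M}'_D}$ and $\widetilde{\mathcal{M}_D}$ be their reduced row echelon forms. Then $\mathrm{Rows}(\widetilde{\mathcal{M}'_D})=\mathrm{Rows}(\widetilde{\mathcal{M}_D})$. Moreover, $\mathcal{M}'_D$ is full-rank and in row echelon form.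
   Context: Let $\mathbb{K}$ be a field of characteristic $0$, $M\subset\mathbb{R}^n$ a polytope with $0\in M$, $S_M\subset\mathbb{Z}^n$ the affine semigroup generated by $M\cap\mathbb{Z}^n$ and $S_M^h\subset\mathbb{Z}^{n+1}$ the one generated by $\{(s,1):s\in M\cap\mathbb{Z}^n\}$, both assumed pointed. $\mathbb{K}[S]$ is the semigroup algebra with monomials $X^s$, $X^sX^t=X^{s+t}$; $\mathbb{K}[S_M^h]$ is graded by $\deg X^{(s,d)}=d$, $\mathbb{K}[S_M^h]_d$ is the degree-$d$ part, and ''homogeneous'' refers to this grading. $\chi:\mathbb{K}[S_M^h]\to\mathbb{K}[S_M]$, $X^{(s,d)}\mapsto X^s$. The affine degree $\delta^A(X^s)$ is the least $d$ with $(s,d)\in S_M^h$, extended to polynomials by the maximum over the support; the sparse degree of $f\in\mathbb{K}[S_M^h]$ is $\delta(f)=\delta^A(\chi(f))$. Fix a monomial order $<_M$ on $\mathbb{K}[S_M]$; the sparse order is $X^s\prec X^r$ iff $\delta^A(X^s)<\delta^A(X^r)$, or equality and $X^s<_MX^r$; the graded sparse order is $X^{(s,d)}\prec_hX^{(r,d')}$ iff $d<d'$, or $d=d'$ and $X^s\prec X^r$. Divisibility: $X^{(s,d_s)}\mid_\delta X^{(r,d_r)}$ if some monomial $X^{(t,d_t)}$ satisfies $X^{(s,d_s)}X^{(t,d_t)}=X^{(r,d_r)}$ and $\delta(X^{(s,d_s)})+\delta(X^{(t,d_t)})=\delta(X^{(r,d_r)})$. A sparse Gröbner basis of $I^h$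 w.r.t. $\prec_h$ is a subset of $I^h$ generating $I^h$ such that every nonzero $f\in I^h$ has some element $g$ of it with $\mathrm{LM}_{\prec_h}(g)\mid_\delta\mathrm{LM}_{\prec_h}(f)$. A Macaulay matrix has columns indexed by monomials (containing all monomials in the supports of the row polynomials) and rows indexed by polynomials; the entry at (row $f$, column $m$) is the coefficient of $m$ in $f$. $\mathrm{Rows}(\mathcal{M})$ is the set of nonzero polynomials represented by the rows of $\mathcal{M}$. *)

From HB Require Import structures.
From mathcomp Require Import all_boot all_order all_algebra.
From mathcomp Require Import finmap.
From mathcomp.multinomials Require Import monalg.
From Stdlib Require Import ClassicalEpsilon.

Set Implicit Arguments.
Unset Strict Implicit.
Unset Printing Implicit Defensive.

Import Order.TTheory GRing.Theory Num.Theory.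
Local Open Scope ring_scope.

Definition pb (P : Prop) : bool :=
  if excluded_middle_informative P then true else false.

Section Setup.
Variable n : nat.

(* exponents of K[S_M^h] : pairs (s, d) with s in Z^n and d in N *)
Definition expo : Type := ('rV[int]_n * nat)%type.
Definition eadd (a b : expo) : expo := (a.1 + b.1, (a.2 + b.2)%N).
(* exponent difference (used only when b divides a) *)
Definition esub (a b : expo) : expo := (a.1 - b.1, (a.2 - b.2)%N).
Definition e0 : expo := (0, 0%N).

Definition in_conv (R : realFieldType) (V : seq 'rV[R]_n) (x : 'rV[R]_n) : Prop :=
  exists w : 'I_(size V) -> R,
    [/\ forall i, 0 <= w i, \sum_i w i = 1 & x = \sum_i w i *: V`_i].

(* A lists (without repetition) the lattice points M cap Z^n of M = conv(V) *)
Definition lattice_points_of (R : realFieldType) (V : seq 'rV[R]_n)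
    (A : seq 'rV[int]_n) : Prop :=
  uniq A /\ forall s : 'rV[int]_n,
    s \in A <-> in_conv V (map_mx (fun z : int => z%:~R) s).

Definition sums (A : seq 'rV[int]_n) (d : nat) : seq 'rV[int]_n :=
  iter d (fun L => [seq a + l | a <- A, l <- L]) [:: 0].

(* (s,d) in S_M^h = semigroup generated by {(a,1) : a in A} *)
Definition inSh (A : seq 'rV[int]_n) (e : expo) : bool := e.1 \in sums A e.2.

Definition inS (A : seq 'rV[int]_n) (s : 'rV[int]_n) : Prop :=
  exists d, s \in sums A d.

Definition S_pointed (A : seq 'rV[int]_n) : Prop :=
  forall s t, inS A s -> inS A t -> s + t = 0 -> s = 0.
Definition Sh_pointed (A : seq 'rV[int]_n) : Prop :=
  forall e f, inSh A e -> inSh A f -> eadd e f = e0 -> e = e0.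

Definition deltaA (A : seq 'rV[int]_n) (s : 'rV[int]_n) : nat :=
  match excluded_middle_informative (exists d, (fun d => inSh A (s, d)) d) with
  | left P => ex_minn P
  | right _ => 0%N
  end.
Definition delta (A : seq 'rV[int]_n) (e : expo) : nat := deltaA A e.1.

Definition monomial_order (A : seq 'rV[int]_n) (ltM : rel 'rV[int]_n) : Prop :=
  [/\ (forall s, inS A s -> ~~ ltM s s),
      (forall s t u, inS A s -> inS A t -> inS A u ->
          ltM s t -> ltM t u -> ltM s u),
      (forall s t, inS A s -> inS A t -> s != t -> ltM s t || ltM t s),
      (forall s t u, inS A s -> inS A t -> inS A u ->
          ltM s t -> ltM (s + u) (t + u))
    & well_founded (fun s t => inS A s /\ ltM s t)].

Definition sp_lt (A : seq 'rV[int]_n) (ltM : rel 'rV[int]_n) (s r : 'rV[int]_n)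
  : bool :=
  (deltaA A s < deltaA A r)%N || ((deltaA A s == deltaA A r) && ltM s r).

Definition gsp_lt (A : seq 'rV[int]_n) (ltM : rel 'rV[int]_n) (e f : expo)
  : bool :=
  (e.2 < f.2)%N || ((e.2 == f.2) && sp_lt A ltM e.1 f.1).

Variable K : fieldType.

(* finitely supported K-linear combinations of monomials X^e, e in Z^n x N *)
Definition spoly : Type := {malg K[expo]}.
Definition Xm (e : expo) : spoly := << e >>.

Definition pmul (f g : spoly) : spoly :=
  \sum_(a <- msupp f) \sum_(b <- msupp g) << f@_a * g@_b *g eadd a b >>.

Definition inKSh (A : seq 'rV[int]_n) (f : spoly) : Prop :=
  forall e, e \in msupp f -> inSh A e.

Definition homog (f : spoly) : Prop :=
  exists d, forall e, e \in msupp f -> e.2 = d.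
Definition pdeg (f : spoly) : nat := \max_(e <- msupp f) e.2.

Definition hcomp (f : spoly) (d : nat) : spoly :=
  \sum_(e <- msupp f | e.2 == d) << f@_e *g e >>.

Definition is_ideal (A : seq 'rV[int]_n) (I : spoly -> Prop) : Prop :=
  [/\ (forall f, I f -> inKSh A f), I 0,
      (forall f g, I f -> I g -> I (f + g))
    & (forall r f, inKSh A r -> I f -> I (pmul r f))].

Definition homog_ideal (A : seq 'rV[int]_n) (I : spoly -> Prop) : Prop :=
  is_ideal A I /\ forall f d, I f -> I (hcomp f d).

Definition LM (A : seq 'rV[int]_n) (ltM : rel 'rV[int]_n) (f : spoly) : expo :=
  foldl (fun acc m => if gsp_lt A ltM acc m then m else acc)
        (head e0 (msupp f)) (msupp f).

Definition ddvd (A : seq 'rV[int]_n) (e r : expo) : Prop :=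
  exists t, [/\ inSh A t, eadd e t = r & (delta A e + delta A t)%N = delta A r].

Definition sparse_GB (A : seq 'rV[int]_n) (ltM : rel 'rV[int]_n)
    (I : spoly -> Prop) (G : seq spoly) : Prop :=
  [/\ (forall g, g \in G -> I g),
      (forall f, I f -> exists rs : seq spoly,
          [/\ size rs = size G, forall r, r \in rs -> inKSh A r
            & f = \sum_(i < size G) pmul rs`_i G`_i])
    & (forall f, I f -> f != 0 ->
          exists2 g, g \in G & g != 0 /\ ddvd A (LM A ltM g) (LM A ltM f))].

Definition macaulay (rows : seq spoly) (cols : seq expo)
  : 'M[K]_(size rows, size cols) :=
  \matrix_(i, j) (rows`_i)@_(nth e0 cols j).

Definition row_poly (cols : seq expo) m (M : 'M[K]_(m, size cols)) (i : 'I_m)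
  : spoly := \sum_(j < size cols) << M i j *g nth e0 cols j >>.

Definition Rows (cols : seq expo) m (M : 'M[K]_(m, size cols)) : spoly -> Prop :=
  fun p => p != 0 /\ exists i, p = row_poly M i.

(* pivot position: index of first nonzero entry of row i (c if zero row) *)
Definition piv m c (M : 'M[K]_(m, c)) (i : 'I_m) : nat :=
  find (fun j : 'I_c => M i j != 0) (enum 'I_c).

Definition row_echelon m c (M : 'M[K]_(m, c)) : Prop :=
  forall i1 i2 : 'I_m, (i1 < i2)%N -> (piv M i2 < c)%N ->
    (piv M i1 < piv M i2)%N.

Definition reduced_row_echelon m c (M : 'M[K]_(m, c)) : Prop :=
  row_echelon M /\
  forall (i : 'I_m) (j : 'I_c), nat_of_ord j = piv M i ->
    M i j = 1 /\ forall i' : 'I_m, i' != i -> M i' j = 0.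

Definition rref_of m c (M N : 'M[K]_(m, c)) : Prop :=
  reduced_row_echelon N /\ (N == M)%MS.

End Setup.

From HB Require Import structures.
From mathcomp Require Import all_boot all_order all_algebra.
From mathcomp Require Import finmap.
From mathcomp.multinomials Require Import monalg.
From Stdlib Require Import ClassicalEpsilon.

Set Implicit Arguments.
Unset Strict Implicit.
Unset Printing Implicit Defensive.
Import Order.TTheory GRing.Theory Num.Theory.
Local Open Scope ring_scope.

(* If X^t LM(g) = m with delta(m) = delta(t) + delta(LM g), then multiplying by
   X^t preserves the graded sparse order among the terms of g, because delta is
   subadditive; so X^t g has leading monomial m.  Hence the rows of M'_D have
   pairwise distinct leading monomials, sorted like the columns: M'_D is in
   echelon form with nonzero pivots, so it has full row rank.  Its rows are rows
   of M_D.  Conversely, every row of M_D lies in I^h_D and is reduced to zero by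
   M'_D column by column, since by the Groebner basis property every leading
   monomial met on the way is in N.  So both matrices have the same row space,
   and two reduced row echelon forms with the same row space have the same
   nonzero rows. *)

Lemma pbP (P : Prop) : reflect P (pb P).
Proof. by rewrite /pb; case: excluded_middle_informative => H; constructor. Qed.

Lemma foldl_argmax (T : eqType) (lt : rel T) (P : pred T) (x0 : T) (s : seq T) :
  {in P & &, transitive lt} ->
  {in P &, forall x y, x != y -> lt x y || lt y x} ->
  all P (x0 :: s) ->
  let m := foldl (fun acc x => if lt acc x then x else acc) x0 s in
  m \in x0 :: s /\ {in x0 :: s, forall y, y = m \/ lt y m}.
Proof.
move=> lt_trans lt_total; elim: s x0 => [|x s IH] x0 /=.
  by move=> _; split=> [|y]; rewrite ?mem_head // inE => /eqP ->; left.
case/and3P=> Px0 Px Ps.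
case lt0x: (lt x0 x).
  have Pxs : all P (x :: s) by rewrite /= Px.
  have [m_in m_max] := IH x Pxs; have Pm := allP Pxs _ m_in.
  split=> [|y]; first by rewrite inE m_in orbT.
  rewrite inE => /orP[/eqP->|/m_max//]; right.
  by case: (m_max x (mem_head _ _)) => [<-//|]; apply: lt_trans.
have Px0s : all P (x0 :: s) by rewrite /= Px0.
have [m_in m_max] := IH x0 Px0s; have Pm := allP Px0s _ m_in.
split=> [|y]; first by move: m_in; rewrite !inE => /orP[]->; rewrite ?orbT.
rewrite !inE => /or3P[/eqP->|/eqP->|ys]; last by apply: m_max; rewrite inE ys orbT.
  exact/m_max/mem_head.
have [->|x_neq] := eqVneq x x0; first exact/m_max/mem_head.
have ltx0 : lt x x0 by have := lt_total _ _ Px Px0 x_neq; rewrite lt0x orbF.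
by right; case: (m_max x0 (mem_head _ _)) => [<-//|]; apply: lt_trans.
Qed.

Section Semigroup.
Variables (n : nat) (A : seq 'rV[int]_n).

Lemma sumsD a b x y :
  x \in sums A a -> y \in sums A b -> x + y \in sums A (a + b).
Proof.
elim: a x => [|a IH] x /=; first by rewrite inE => /eqP ->; rewrite add0r.
case/allpairsP=> [[a0 l] /= [a0A lS ->]] yS.
by rewrite -addrA; apply: allpairs_f => //; apply: IH.
Qed.

Lemma inShD (e f : expo n) : inSh A e -> inSh A f -> inSh A (eadd e f).
Proof. exact: sumsD. Qed.

Lemma inSh_inS (e : expo n) : inSh A e -> inS A e.1.
Proof. by exists e.2. Qed.

Lemma deltaA_min s d :
  inSh A (s, d) -> inSh A (s, deltaA A s) /\ (deltaA A s <= d)%N.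
Proof.
move=> sd; rewrite /deltaA; case: excluded_middle_informative => [ex|]; last first.
  by case; exists d.
by case: ex_minnP => m Sm m_min; split=> //; apply: m_min.
Qed.

Lemma deltaAD_le s t : inS A s -> inS A t ->
  (deltaA A (s + t) <= deltaA A s + deltaA A t)%N.
Proof.
move=> [ds /deltaA_min[Ss _]] [dt /deltaA_min[St _]].
by have [] := deltaA_min (inShD Ss St).
Qed.

End Semigroup.

Section GradedSparseOrder.
Variables (n : nat) (A : seq 'rV[int]_n) (ltM : rel 'rV[int]_n).
Hypothesis ltM_order : monomial_order A ltM.

Local Notation lth := (gsp_lt A ltM).

Lemma gsp_ltxx e : inSh A e -> ~~ lth e e.
Proof.
case: ltM_order => irr _ _ _ _ Se.
by rewrite /gsp_lt /sp_lt !ltnn !eqxx (negbTE (irr _ (inSh_inS Se))).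
Qed.

Lemma gsp_lt_trans : {in inSh A & &, transitive lth}.
Proof.
case: ltM_order => _ tr _ _ _ f e g Sf Se Sg.
rewrite /gsp_lt /sp_lt.
case/orP=> [lt1|/andP[/eqP eq1 lt1]]; case/orP=> [lt2|/andP[/eqP eq2 lt2]].
- by rewrite (ltn_trans lt1 lt2).
- by rewrite -eq2 lt1.
- by rewrite eq1 lt2.
rewrite eq1 eq2 eqxx ltnn /=.
case/orP: lt1 => [d1|/andP[/eqP d1 l1]]; case/orP: lt2 => [d2|/andP[/eqP d2 l2]].
- by rewrite (ltn_trans d1 d2).
- by rewrite -d2 d1.
- by rewrite d1 d2.
by rewrite d1 d2 eqxx (tr _ _ _ (inSh_inS Se) (inSh_inS Sf) (inSh_inS Sg) l1 l2) orbT.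
Qed.

Lemma gsp_lt_total : {in inSh A &, forall e f, e != f -> lth e f || lth f e}.
Proof.
case: ltM_order => _ _ tot _ _ [e1 e2] [f1 f2] /inSh_inS Se /inSh_inS Sf ef.
rewrite /gsp_lt /sp_lt /=.
case: (ltngtP e2 f2) => //= E2; case: (ltngtP (deltaA A e1) (deltaA A f1)) => //= _.
by apply: tot => //; apply: contra ef => /eqP->; rewrite E2.
Qed.

(* By subadditivity delta (t + e) <= delta t + delta e, while delta (t + L) is
   additive, so the sparse degree of [t + e] stays below that of [t + L]. *)
Lemma gsp_ltD e L t : inSh A e -> inSh A L -> inSh A t ->
  delta A (eadd t L) = (delta A L + delta A t)%N ->
  lth e L -> lth (eadd t e) (eadd t L).
Proof.
case: ltM_order => _ _ _ ltMD _ Se SL St; rewrite /delta /= => dtL.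
rewrite /gsp_lt /sp_lt /= ltn_add2l eqn_add2l.
case/orP=> [->//|/andP[/eqP eq2 lt1]]; rewrite eq2 ltnn eqxx /=.
have := deltaAD_le (inSh_inS St) (inSh_inS Se); rewrite dtL addnC.
case/orP: lt1 => [d1|/andP[/eqP d1 l1]] le_te.
  by rewrite (leq_ltn_trans le_te) // ltn_add2r.
rewrite d1 in le_te; rewrite ltn_neqAle le_te andbT.
case: eqP => //= _.
by rewrite ![t.1 + _]addrC; apply: ltMD => //; apply: inSh_inS.
Qed.

End GradedSparseOrder.

(* [pmul] is [malg_mul eadd]; proving its properties over an abstract monomial
   type keeps unification from unfolding [expo n]. *)
Section MonomialAlgebraProduct.
Variables (T : choiceType) (K : fieldType) (add : T -> T -> T).
Implicit Types (t b x : T) (c : K) (f g : {malg K[T]}).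

Definition malg_mul f g : {malg K[T]} :=
  \sum_(a <- msupp f) \sum_(b <- msupp g) << f@_a * g@_b *g add a b >>.

Lemma mcoeff_sum (I : Type) (r : seq I) (F : I -> {malg K[T]}) x :
  (\sum_(i <- r) F i)@_x = \sum_(i <- r) (F i)@_x.
Proof. exact: raddf_sum. Qed.

Lemma mcoeff_malg_mulU c t g x :
  (malg_mul << c *g t >> g)@_x = c * \sum_(b <- msupp g) g@_b *+ (add t b == x).
Proof.
rewrite /malg_mul msuppU; case: eqP => [->|_]; first by rewrite big_nil mcoeff0 mul0r.
rewrite big_seq_fset1 mcoeff_sum mulr_sumr; apply: eq_bigr => b _.
by rewrite mcoeffUU mcoeffU mulrnAr.
Qed.

Lemma malg_mulU c t g : malg_mul << c *g t >> g = c *: malg_mul << t >> g.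
Proof. by apply/malgP => x; rewrite mcoeffZ !mcoeff_malg_mulU mul1r. Qed.

Lemma mcoeff_malg_mulX t g b : injective (add t) -> (malg_mul << t >> g)@_(add t b) = g@_b.
Proof.
move=> add_inj; rewrite mcoeff_malg_mulU mul1r {3}(monalgE g) mcoeff_sum.
by apply: eq_bigr => b' _; rewrite mcoeffU (inj_eq add_inj).
Qed.

Lemma mcoeff_malg_mulX_neq0 t g x : (malg_mul << t >> g)@_x != 0 ->
  exists2 b, b \in msupp g & x = add t b.
Proof.
rewrite mcoeff_malg_mulU mul1r.
have [/hasP[b b_in /eqP <-]|/hasPn no_b] := boolP (has (fun b => add t b == x) (msupp g)).
  by exists b.
by rewrite big1_seq ?eqxx // => b /no_b /negbTE ->.
Qed.

End MonomialAlgebraProduct.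

Section MonomialProduct.
Variables (n : nat) (K : fieldType).
Implicit Types (t b x : expo n) (c : K) (g : spoly n K).

Lemma eadd_inj t : injective (eadd t).
Proof. by case: t => t1 t2 [a1 a2] [b1 b2] [/addrI-> /addnI->]. Qed.

Lemma esub_eadd (a b : expo n) : esub (eadd a b) a = b.
Proof. by case: a b => [a1 a2] [b1 b2]; rewrite /esub /eadd /= [a1 + _]addrC addrK addKn. Qed.

Lemma pmulU c t g : pmul << c *g t >> g = c *: pmul (Xm K t) g.
Proof. exact: (malg_mulU (@eadd n) c t g). Qed.

Lemma mcoeff_pmulX t g b : (pmul (Xm K t) g)@_(eadd t b) = g@_b.
Proof. exact: (mcoeff_malg_mulX g b (@eadd_inj t)). Qed.

Lemma mcoeff_pmulX_neq0 t g x : (pmul (Xm K t) g)@_x != 0 ->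
  exists2 b, b \in msupp g & x = eadd t b.
Proof. exact: mcoeff_malg_mulX_neq0. Qed.

Variable A : seq 'rV[int]_n.

Lemma inKSh_U c t : inSh A t -> inKSh A << c *g t >>.
Proof. by move=> St e; rewrite msuppU; case: eqP => _; rewrite ?inE // => /eqP ->. Qed.

Lemma ideal_pmulU I g c t : is_ideal A I -> I g -> inSh A t -> I (pmul << c *g t >> g).
Proof. by case=> _ _ _ IM Ig St; apply: IM Ig; apply: inKSh_U. Qed.

Lemma idealB_pmulX I f g c t : is_ideal A I -> I f -> I g -> inSh A t ->
  I (f - c *: pmul (Xm K t) g).
Proof.
move=> I_ideal If Ig St; rewrite -scaleNr -pmulU.
by case: (I_ideal) => _ _ IB _; apply: IB If (ideal_pmulU (- c) I_ideal Ig St).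
Qed.

Lemma pdeg_homog g d e : (forall e, e \in msupp g -> e.2 = d) ->
  e \in msupp g -> pdeg g = d.
Proof.
move=> g_hom e_in; apply/eqP; rewrite eqn_leq; apply/andP; split.
  by apply/bigmax_leqP_seq => i i_in _; rewrite g_hom.
by rewrite -(g_hom e e_in); apply: (leq_bigmax_seq (F := fun e : expo n => e.2)).
Qed.

End MonomialProduct.

Section LeadingMonomial.
Variables (n : nat) (K : fieldType) (A : seq 'rV[int]_n) (ltM : rel 'rV[int]_n).
Hypothesis ltM_order : monomial_order A ltM.
Implicit Types (g : spoly n K) (t x : expo n).

Local Notation LM := (LM A ltM).
Local Notation lth := (gsp_lt A ltM).

Lemma LM_spec g : g != 0 -> inKSh A g ->
  LM g \in msupp g /\ forall e, e \in msupp g -> e = LM g \/ lth e (LM g).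
Proof.
move=> g_neq0 g_Sh; rewrite /LM.
case def_s: (enum_fset (msupp g)) => [|h s].
  by case/eqP: g_neq0; rewrite (monalgE g) def_s big_nil.
have memE x : (x \in msupp g) = (x \in h :: s) by rewrite -def_s.
have Ps : all (inSh A) (h :: h :: s).
  by apply/allP => x; rewrite inE -memE => /predU1P[->|]; apply: g_Sh; rewrite memE ?mem_head.
have [m_in m_max] := foldl_argmax (gsp_lt_trans ltM_order) (gsp_lt_total ltM_order) Ps.
split; first by move: m_in; rewrite memE /= inE => /predU1P[->|]; rewrite ?mem_head.
by move=> e; rewrite memE => e_in; apply: m_max; rewrite inE e_in orbT.
Qed.

Lemma mcoeff_LM_neq0 g : g != 0 -> inKSh A g -> g@_(LM g) != 0.
Proof. by move=> g_neq0 g_Sh; rewrite mcoeff_neq0; case: (LM_spec g_neq0 g_Sh). Qed.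

Lemma mcoeff_pmulX_gt g t x : g != 0 -> inKSh A g -> inSh A t ->
  delta A (eadd t (LM g)) = (delta A (LM g) + delta A t)%N ->
  inSh A x -> lth (eadd t (LM g)) x -> (pmul (Xm K t) g)@_x = 0.
Proof.
move=> g_neq0 g_Sh t_Sh t_ddvd x_Sh lt_x.
apply/eqP; apply/negP => /negP /mcoeff_pmulX_neq0 [b b_in def_x].
subst x; have [L_in L_max] := LM_spec g_neq0 g_Sh.
have tL_Sh : inSh A (eadd t (LM g)) by apply: inShD => //; apply: g_Sh.
case: (L_max b b_in) => [eq_b|lt_b].
  by move: lt_x; rewrite eq_b; apply/negP; apply: gsp_ltxx.
have lt_tb := gsp_ltD ltM_order (g_Sh _ b_in) (g_Sh _ L_in) t_Sh t_ddvd lt_b.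
by move: (gsp_lt_trans ltM_order tL_Sh x_Sh x_Sh lt_tb lt_x); apply/negP; apply: gsp_ltxx.
Qed.

End LeadingMonomial.

Section Echelon.
Variable K : fieldType.
Implicit Types (m c : nat).

Lemma entry_before_piv m c (M : 'M[K]_(m, c)) i (j : 'I_c) :
  (j < piv M i)%N -> M i j = 0.
Proof. by move=> /(before_find j); rewrite nth_ord_enum => /negbFE/eqP. Qed.

Lemma entry_piv_neq0 m c (M : 'M[K]_(m, c)) i (j : 'I_c) :
  nat_of_ord j = piv M i -> M i j != 0.
Proof.
move=> j_piv; have M_has : has (fun j => M i j != 0) (enum 'I_c).
  by rewrite has_find size_enum_ord -/(piv M i) -j_piv.
by have := nth_find j M_has; rewrite -/(piv M i) -j_piv nth_ord_enum.
Qed.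

Lemma zero_row_piv m c (M : 'M[K]_(m, c)) i :
  (c <= piv M i)%N -> forall j, M i j = 0.
Proof. by move=> c_le j; apply: entry_before_piv; apply: leq_trans c_le. Qed.

Lemma pivE m c (M : 'M[K]_(m, c)) i (j : 'I_c) : M i j != 0 ->
  (forall j' : 'I_c, (j' < j)%N -> M i j' = 0) -> piv M i = j.
Proof.
move=> Mij_neq0 before_j; apply/eqP; rewrite eqn_leq; apply/andP; split.
  by rewrite leqNgt; apply/negP => /entry_before_piv; apply/eqP.
rewrite leqNgt; apply/negP => lt_piv.
have piv_c : (piv M i < c)%N by apply: ltn_trans lt_piv (ltn_ord j).
by move: (@entry_piv_neq0 _ _ M i (Ordinal piv_c) erefl); rewrite before_j ?eqxx.
Qed.

Lemma row_echelon_free m c (M : 'M[K]_(m, c)) :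
  (forall i, piv M i < c)%N ->
  (forall i1 i2 : 'I_m, (i1 < i2)%N -> (piv M i1 < piv M i2)%N) -> row_free M.
Proof.
move=> piv_c piv_lt; rewrite -kermx_eq0 -submx0; apply/row_subP => i.
rewrite submx0; move: (row i _) (row_sub i (kermx M)) => v /sub_kermxP vM0.
suff v_lt k (l : 'I_m) : (l < k)%N -> v 0 l = 0.
  by apply/eqP/rowP => l; rewrite (v_lt l.+1) ?mxE.
elim: k l => [//|k IH] l; rewrite ltnS leq_eqVlt => /orP[/eqP l_k|]; last exact: IH.
set j := Ordinal (piv_c l).
have := congr1 (fun w : 'rV[K]_c => w 0 j) vM0; rewrite !mxE (bigD1 l) //= big1.
  rewrite addr0 => /eqP; rewrite mulf_eq0 => /orP[/eqP //|].
  by rewrite (negbTE (entry_piv_neq0 (j := j) erefl)).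
move=> l' l'_neq; case: (ltngtP l' l) => [l'_lt|l_lt|/val_inj l'_l].
- by rewrite IH ?mul0r // -l_k.
- by rewrite (entry_before_piv (j := j)) ?mulr0 //= piv_lt.
- by rewrite l'_l eqxx in l'_neq.
Qed.

Lemma rref_piv_col m c (N : 'M[K]_(m, c)) k (j : 'I_c) :
  reduced_row_echelon N -> nat_of_ord j = piv N k -> forall l, N l j = (l == k)%:R.
Proof. by case=> _ red j_piv l; have [? Nj0] := red _ _ j_piv; case: eqVneq => [->|/Nj0]. Qed.

Lemma rref_piv_inj m c (N : 'M[K]_(m, c)) k k' :
  reduced_row_echelon N -> (piv N k < c)%N -> piv N k = piv N k' -> k = k'.
Proof.
move=> N_rref piv_c piv_eq.
have := rref_piv_col (j := Ordinal piv_c) N_rref erefl k'.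
rewrite (rref_piv_col (j := Ordinal piv_c) N_rref piv_eq) eqxx.
by case: eqVneq => // _ /eqP; rewrite mulr1n mulr0n oner_eq0.
Qed.

Lemma rref_mul_piv m c (N : 'M[K]_(m, c)) (u : 'rV_m) k (j : 'I_c) :
  reduced_row_echelon N -> nat_of_ord j = piv N k -> (u *m N) 0 j = u 0 k.
Proof.
move=> N_rref j_piv; rewrite !mxE (bigD1 k) //= (rref_piv_col N_rref j_piv) eqxx mulr1.
by rewrite big1 ?addr0 // => l /negbTE l_k; rewrite (rref_piv_col N_rref j_piv) l_k mulr0.
Qed.

Section TwoRref.
Variables (m1 m2 c : nat) (N1 : 'M[K]_(m1, c)) (N2 : 'M[K]_(m2, c)).
Hypotheses (N1_rref : reduced_row_echelon N1) (N2_rref : reduced_row_echelon N2).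

(* Otherwise the entry of [row i N1 = u *m N2] at column [piv N1 i] vanishes:
   rows of [N2] pivoting later are zero there, and rows pivoting earlier have
   coefficient 0 in [u], as [row i N1] is zero at their pivot. *)
Lemma rref_piv_sub i : (N1 <= N2)%MS -> (piv N1 i < c)%N ->
  exists k, piv N2 k = piv N1 i.
Proof.
move=> sN12 piv_c; have /submxP [u def_i] := submx_trans (row_sub i N1) sN12.
have [/existsP [k /eqP]|no_k] := boolP [exists k, piv N2 k == piv N1 i]; first by exists k.
set j := Ordinal piv_c; have := @entry_piv_neq0 _ _ N1 i j erefl.
have -> : N1 i j = row i N1 0 j by rewrite mxE.
rewrite def_i mxE big1 ?eqxx // => k _.
case: (ltngtP (piv N2 k) (piv N1 i)) => [lt_k|gt_k|eq_k].
- have piv_k : (piv N2 k < c)%N by apply: ltn_trans lt_k piv_c.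
  have := rref_mul_piv u (j := Ordinal piv_k) N2_rref erefl.
  by rewrite -def_i mxE (entry_before_piv (j := Ordinal piv_k)) // => <-; rewrite mul0r.
- by rewrite (entry_before_piv (j := j)) ?mulr0.
- by move: no_k; rewrite negb_exists => /forallP /(_ k); rewrite eq_k eqxx.
Qed.

Lemma rref_row_eq i : (N1 :=: N2)%MS -> (piv N1 i < c)%N ->
  exists k, row k N2 = row i N1.
Proof.
move=> eqN piv_c; have sN12 : (N1 <= N2)%MS by rewrite eqN.
have [k piv_k] := rref_piv_sub sN12 piv_c.
exists k; apply/eqP; rewrite eq_sym -subr_eq0; apply/eqP.
have /submxP [v def_v] : (row i N1 - row k N2 <= N1)%MS.
  by rewrite addmx_sub ?row_sub // eqmx_opp eqN row_sub.
rewrite def_v mulmx_sum_row; apply: big1 => l _.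
have [piv_l|c_le] := ltnP (piv N1 l) c; last first.
  by apply/rowP => j; rewrite !mxE (zero_row_piv c_le) mulr0.
have [k' piv_k'] := rref_piv_sub sN12 piv_l.
have := rref_mul_piv v (j := Ordinal piv_l) N1_rref erefl.
rewrite -def_v !mxE (rref_piv_col (j := Ordinal piv_l) N1_rref erefl i).
rewrite (rref_piv_col (j := Ordinal piv_l) N2_rref (esym piv_k') k).
have -> : (i == l) = (k == k').
  apply/eqP/eqP => [i_l|k_k'].
    by apply: (rref_piv_inj N2_rref); rewrite piv_k ?piv_k' ?i_l.
  by apply: (rref_piv_inj N1_rref) => //; rewrite -piv_k -piv_k' k_k'.
by rewrite subrr => <-; rewrite scale0r.
Qed.

End TwoRref.
End Echelon.

Lemma index_nth_filter_lt (T : eqType) (P : pred T) (s : seq T) x0 i1 i2 :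
  uniq s -> (i1 < i2)%N -> (i2 < size (filter P s))%N ->
  (index (nth x0 (filter P s) i1) s < index (nth x0 (filter P s) i2) s)%N.
Proof.
elim: s i1 i2 => [|x s IH] i1 i2 //= /andP[x_notin s_uniq].
have x_neq i : (i < size (filter P s))%N -> (x == nth x0 (filter P s) i) = false.
  move=> i_lt; apply/negP => /eqP x_nth; move: x_notin; rewrite x_nth.
  by have := mem_nth x0 i_lt; rewrite mem_filter => /andP[_ ->].
case: (P x) => /= [|lt_i i2_lt]; last first.
  by have i1_lt := ltn_trans lt_i i2_lt; rewrite !x_neq ?ltnS ?IH.
case: i1 i2 => [|i1] [|i2] //= lt_i i2_lt; first by rewrite eqxx x_neq.
by have i1_lt := ltn_trans lt_i i2_lt; rewrite !x_neq ?ltnS ?IH.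
Qed.

Section Macaulay.
Variables (n : nat) (K : fieldType).
Implicit Types (cols : seq (expo n)) (rows : seq (spoly n K)) (f p : spoly n K).

Definition coefs cols f : 'rV[K]_(size cols) :=
  \row_j f@_(nth (e0 n) cols j).

Lemma row_macaulay rows cols i : row i (macaulay rows cols) = coefs cols rows`_i.
Proof. by apply/rowP => j; rewrite !mxE. Qed.

Lemma coefs_sub_macaulay rows cols f :
  f \in rows -> (coefs cols f <= macaulay rows cols)%MS.
Proof.
move=> f_in; have i_lt : (index f rows < size rows)%N by rewrite index_mem.
by rewrite -(nth_index 0 f_in) -(row_macaulay cols (Ordinal i_lt)) row_sub.
Qed.

Lemma macaulay_subP rows cols m (N : 'M[K]_(m, size cols)) :
  (forall f, f \in rows -> (coefs cols f <= N)%MS) -> (macaulay rows cols <= N)%MS.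
Proof. by move=> rows_sub; apply/row_subP => i; rewrite row_macaulay rows_sub ?mem_nth. Qed.

Lemma row_poly0 cols m (M : 'M[K]_(m, size cols)) i :
  (forall j, M i j = 0) -> row_poly M i = 0.
Proof. by move=> Mi0; rewrite /row_poly big1 // => j _; rewrite Mi0 monalgU0. Qed.

Lemma rref_Rows cols m1 m2 (N1 : 'M[K]_(m1, size cols)) (N2 : 'M[K]_(m2, size cols)) p :
  reduced_row_echelon N1 -> reduced_row_echelon N2 -> (N1 :=: N2)%MS ->
  Rows N1 p -> Rows N2 p.
Proof.
move=> N1_rref N2_rref eqN [p_neq0 [i def_p]]; split=> //.
have [piv_c|c_le] := ltnP (piv N1 i) (size cols); last first.
  by case/eqP: p_neq0; rewrite def_p; apply/row_poly0/zero_row_piv.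
have [k row_k] := rref_row_eq N1_rref N2_rref eqN piv_c.
exists k; rewrite def_p /row_poly; apply: eq_bigr => j _.
by have := congr1 (fun r : 'rV[K]_(size cols) => r 0 j) row_k; rewrite !mxE => ->.
Qed.

End Macaulay.

Section MacaulayMatrices.
Variables (n : nat) (K : fieldType) (A : seq 'rV[int]_n) (ltM : rel 'rV[int]_n).
Variables (I : spoly n K -> Prop) (G : seq (spoly n K)) (D : nat).
Variables (cols : seq (expo n)) (assoc : expo n -> spoly n K).
Hypotheses (ltM_order : monomial_order A ltM) (I_ideal : is_ideal A I).
Hypotheses (G_homog : forall g, g \in G -> homog g) (G_GB : sparse_GB A ltM I G).
Hypotheses (cols_uniq : uniq cols) (colsE : forall e, (e \in cols) = inSh A e && (e.2 == D)).
Hypothesis cols_sorted : sorted (fun a b => gsp_lt A ltM b a) cols.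

Local Notation LM := (LM A ltM).
Local Notation lth := (gsp_lt A ltM).
Local Notation col j := (nth (e0 n) cols j).

Definition inN (m : expo n) : bool :=
  pb (exists2 g, g \in G & g != 0 /\ ddvd A (LM g) m).

Hypothesis assocP : forall m, m \in cols -> inN m ->
  [/\ assoc m \in G, assoc m != 0 & ddvd A (LM (assoc m)) m].

Definition reducer (m : expo n) : spoly n K :=
  pmul (Xm K (esub m (LM (assoc m)))) (assoc m).

Definition rowsR : seq (spoly n K) := [seq reducer m | m <- cols & inN m].

Definition rowsM : seq (spoly n K) :=
  flatten [seq [seq pmul (Xm K (u, (D - pdeg g)%N)) g | u <- undup (sums A (D - pdeg g))]
          | g <- G & (pdeg g <= D)%N].

Definition MR := macaulay rowsR cols.
Definition MD := macaulay rowsM cols.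

Lemma cols_Sh x : x \in cols -> inSh A x.
Proof. by rewrite colsE => /andP[]. Qed.

Lemma cols_deg x : x \in cols -> x.2 = D.
Proof. by rewrite colsE => /andP[_ /eqP]. Qed.

Lemma col_lt j j' : (j < j')%N -> (j' < size cols)%N -> lth (col j') (col j).
Proof.
move=> lt_j j'_lt; have j_lt := ltn_trans lt_j j'_lt.
have cols_Sh' : all (inSh A) cols by apply/allP => x /cols_Sh.
have lt_trans : {in inSh A & &, transitive (fun a b => lth b a)}.
  by move=> y x z Sy Sx Sz xy yz; apply: (gsp_lt_trans ltM_order Sy Sz Sx).
by apply: (sorted_ltn_nth_in lt_trans (e0 n) cols_Sh' cols_sorted); rewrite ?inE.
Qed.

Lemma G_Sh g : g \in G -> inKSh A g.
Proof. by case: I_ideal G_GB => I_Sh _ _ _ [GI _ _] /GI /I_Sh. Qed.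

Lemma pdeg_LM g : g \in G -> g != 0 -> pdeg g = (LM g).2.
Proof.
move=> g_in g_neq0; have [d g_hom] := G_homog g_in.
have [L_in _] := LM_spec ltM_order g_neq0 (G_Sh g_in).
by rewrite (pdeg_homog g_hom L_in) (g_hom _ L_in).
Qed.

Section Reducer.
Variable m : expo n.
Hypotheses (m_col : m \in cols) (m_N : inN m).

Let g := assoc m.
Let t := esub m (LM g).

Lemma reducer_spec :
  [/\ g \in G, g != 0, inSh A t, m = eadd t (LM g)
    & delta A (eadd t (LM g)) = (delta A (LM g) + delta A t)%N].
Proof.
have [g_in g_neq0 [t' [St' def_m dt']]] := assocP m_col m_N.
have def_t : t = t' by rewrite /t -{1}def_m esub_eadd.
have def_m' : m = eadd t (LM g) by rewrite def_t -def_m /eadd addrC addnC.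
by split; rewrite -?def_m' // def_t.
Qed.

Lemma mcoeff_reducer_neq0 : (reducer m)@_m != 0.
Proof.
have [g_in g_neq0 St def_m dt] := reducer_spec.
rewrite /reducer -/g -/t def_m mcoeff_pmulX.
by apply: mcoeff_LM_neq0 => //; apply: G_Sh.
Qed.

Lemma mcoeff_reducer_gt x : inSh A x -> lth m x -> (reducer m)@_x = 0.
Proof.
have [g_in g_neq0 St def_m dt] := reducer_spec.
rewrite {1}def_m /reducer -/g -/t => Sx.
exact: (mcoeff_pmulX_gt ltM_order g_neq0 (G_Sh g_in) St dt Sx).
Qed.

Lemma msupp_reducer : {subset msupp (reducer m) <= cols}.
Proof.
have [g_in g_neq0 St def_m _] := reducer_spec.
have [L_in _] := LM_spec ltM_order g_neq0 (G_Sh g_in).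
have [d g_hom] := G_homog g_in.
have m2 : m.2 = (t.2 + d)%N by rewrite {1}def_m /= (g_hom _ L_in).
move=> x; rewrite -mcoeff_neq0 => /mcoeff_pmulX_neq0 [b b_in ->].
by rewrite colsE (inShD St (G_Sh g_in b_in)) /= (g_hom _ b_in) -m2 (cols_deg m_col).
Qed.

Lemma reducer_in_rowsM : reducer m \in rowsM.
Proof.
have [g_in g_neq0 St def_m _] := reducer_spec.
have t2 : t.2 = (D - pdeg g)%N by rewrite pdeg_LM // -(cols_deg m_col) def_m addnK.
apply/flatten_mapP; exists g.
  by rewrite mem_filter g_in pdeg_LM // -(cols_deg m_col) def_m leq_addl.
by apply/mapP; exists t.1; rewrite ?mem_undup -t2 // -surjective_pairing.
Qed.

End Reducer.

Let filtN := [seq m <- cols | inN m].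

Lemma nth_filtN (i : 'I_(size rowsR)) :
  [/\ nth (e0 n) filtN i \in cols, inN (nth (e0 n) filtN i)
    & rowsR`_i = reducer (nth (e0 n) filtN i)].
Proof.
have i_lt : (i < size filtN)%N by rewrite -(size_map reducer).
have := mem_nth (e0 n) i_lt; rewrite mem_filter => /andP[-> ->].
by rewrite (nth_map (e0 n)).
Qed.

Lemma piv_MR i : piv MR i = index (nth (e0 n) filtN i) cols.
Proof.
have [m_col m_N def_row] := nth_filtN i; set m := nth _ _ _ in m_col m_N def_row *.
have j_lt : (index m cols < size cols)%N by rewrite index_mem.
apply: (pivE (j := Ordinal j_lt)) => [|j' lt_j'];
  rewrite /MR /macaulay mxE def_row /=; first by rewrite nth_index // mcoeff_reducer_neq0.
have j'_lt := ltn_trans lt_j' j_lt.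
rewrite mcoeff_reducer_gt ?cols_Sh ?mem_nth //.
by have := col_lt lt_j' j_lt; rewrite nth_index.
Qed.

Lemma MR_row_echelon : row_echelon MR.
Proof.
move=> i1 i2 lt_i _; rewrite !piv_MR index_nth_filter_lt //.
by rewrite -(size_map reducer).
Qed.

Lemma rank_MR : \rank MR = size rowsR.
Proof.
have piv_lt i : (piv MR i < size cols)%N by rewrite piv_MR index_mem; case: (nth_filtN i).
by apply/eqP; apply: row_echelon_free => // i1 i2 lt_i; apply: MR_row_echelon.
Qed.

Definition zero_before k (f : spoly n K) := forall j, (j < k)%N -> f@_(col j) = 0.

Lemma LM_zero_before k f : {subset msupp f <= cols} -> zero_before k f ->
  f@_(col k) != 0 -> LM f = col k.
Proof.
move=> f_cols f_zero fk_neq0; have f_neq0 : f != 0.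
  by apply: contraNneq fk_neq0 => ->; rewrite mcoeff0.
have [L_in L_max] := LM_spec ltM_order f_neq0 (fun e e_in => cols_Sh (f_cols e e_in)).
have colk_in : col k \in msupp f by rewrite -mcoeff_neq0.
case: (L_max _ colk_in) => [-> //|lt_kL].
have L_col := f_cols _ L_in; have def_L := nth_index (e0 n) L_col.
have j_lt : (index (LM f) cols < size cols)%N by rewrite index_mem.
case: (ltngtP (index (LM f) cols) k) => [lt_jk|lt_kj|eq_jk].
- by move: L_in; rewrite -mcoeff_neq0 -def_L f_zero ?eqxx.
- have SL := cols_Sh L_col; have Sk := cols_Sh (f_cols _ colk_in).
  have lt_Lk := col_lt lt_kj j_lt; rewrite def_L in lt_Lk.
  by case/negP: (gsp_ltxx ltM_order SL); apply: (gsp_lt_trans ltM_order Sk SL SL lt_Lk lt_kL).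
- by rewrite -def_L eq_jk.
Qed.

Lemma inN_LM f : I f -> f != 0 -> inN (LM f).
Proof. by case: G_GB => _ _ GLM If f_neq0; apply/pbP; apply: GLM. Qed.

Section ReduceStep.
Variables (k : nat) (f : spoly n K).
Hypotheses (f_I : I f) (f_cols : {subset msupp f <= cols}) (f_zero : zero_before k f).
Hypotheses (k_lt : (k < size cols)%N) (fk_neq0 : f@_(col k) != 0).

Let m := col k.
Let c := f@_m / (reducer m)@_m.

Lemma col_reducer : m \in cols /\ inN m.
Proof.
have f_neq0 : f != 0 by apply: contraNneq fk_neq0 => ->; rewrite mcoeff0.
by rewrite mem_nth // /m -(LM_zero_before f_cols f_zero fk_neq0) inN_LM.
Qed.

Lemma reduce_step :
  [/\ I (f - c *: reducer m), {subset msupp (f - c *: reducer m) <= cols}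
    & zero_before k.+1 (f - c *: reducer m)].
Proof.
have [m_col m_N] := col_reducer; have [g_in _ St _ _] := reducer_spec m_col m_N.
split.
- by case: G_GB => GI _ _; apply: (idealB_pmulX _ I_ideal f_I (GI _ g_in) St).
- move=> x /(fsubsetP (msuppB_le _ _)); rewrite in_fsetU => /orP[/f_cols //|].
  by move/(fsubsetP (msuppZ_le _ _)); apply: msupp_reducer.
move=> j; rewrite ltnS leq_eqVlt mcoeffB mcoeffZ => /predU1P[->|lt_jk].
  by rewrite /c divfK ?subrr ?mcoeff_reducer_neq0.
have j_lt := ltn_trans lt_jk k_lt.
by rewrite f_zero // mcoeff_reducer_gt ?mulr0 ?subrr ?cols_Sh ?mem_nth ?col_lt.
Qed.

End ReduceStep.

(* Clear the columns from left to right: the first nonzero column of [g] is its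
   leading monomial, which is in N by the Groebner basis property. *)
Lemma coefs_sub_MR f : I f -> {subset msupp f <= cols} -> (coefs cols f <= MR)%MS.
Proof.
suff red d k g : (size cols - k < d)%N -> I g -> {subset msupp g <= cols} ->
    zero_before k g -> (coefs cols g <= MR)%MS.
  by move=> f_I f_cols; apply: (red _ 0 f (ltnSn _)).
elim: d k g => [//|d IH] k g lt_d g_I g_cols g_zero.
have [k_ge|k_lt] := leqP (size cols) k.
  suff -> : coefs cols g = 0 by rewrite sub0mx.
  by apply/rowP => j; rewrite !mxE g_zero // (leq_trans (ltn_ord j)).
have lt_d' : (size cols - k.+1 < d)%N by rewrite subnS -ltnS prednK ?subn_gt0.
have [gk0|gk_neq0] := eqVneq g@_(col k) 0.
  by apply: (IH k.+1) => // j; rewrite ltnS leq_eqVlt => /predU1P[->|/g_zero].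
have [m_col m_N] := col_reducer g_I g_cols g_zero k_lt gk_neq0.
have [g'_I g'_cols g'_zero] := reduce_step g_I g_cols g_zero k_lt gk_neq0.
set c := _ / _ in g'_I g'_cols g'_zero; set r := reducer _ in c g'_I g'_cols g'_zero *.
have -> : coefs cols g = coefs cols (g - c *: r) + c *: coefs cols r.
  by apply/rowP => j; rewrite !mxE mcoeffB mcoeffZ subrK.
apply: addmx_sub; first exact: (IH k.+1).
by apply/scalemx_sub/coefs_sub_macaulay/map_f; rewrite mem_filter m_N.
Qed.

Lemma MR_sub_MD : (MR <= MD)%MS.
Proof.
apply: macaulay_subP => f /mapP [m]; rewrite mem_filter => /andP[m_N m_col] ->.
exact/coefs_sub_macaulay/reducer_in_rowsM.
Qed.

Lemma MD_sub_MR : (MD <= MR)%MS.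
Proof.
apply: macaulay_subP => f /flatten_mapP [g]; rewrite mem_filter => /andP[deg_g g_in].
case/mapP=> u; rewrite mem_undup => u_sums ->.
have Su : inSh A (u, (D - pdeg g)%N) by [].
apply: coefs_sub_MR.
  by case: G_GB => GI _ _; apply: (ideal_pmulU 1 I_ideal (GI _ g_in) Su).
move=> x; rewrite -mcoeff_neq0 => /mcoeff_pmulX_neq0 [b b_in ->].
have [d g_hom] := G_homog g_in.
by rewrite colsE (inShD Su (G_Sh g_in b_in)) /= (g_hom _ b_in) -(pdeg_homog g_hom b_in) subnK.
Qed.

Lemma MR_eqmx_MD : (MR :=: MD)%MS.
Proof. by apply/eqmxP; rewrite MR_sub_MD MD_sub_MR. Qed.

End MacaulayMatrices.

Unset Implicit Arguments.

Theorem mainTheorem9 (n : nat) (K : fieldType) (R : realFieldType)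
  (V : seq 'rV[R]_n) (A : seq 'rV[int]_n) (ltM : rel 'rV[int]_n)
  (I : spoly n K -> Prop) (G : seq (spoly n K)) (D : nat)
  (cols : seq (expo n)) (assoc : expo n -> spoly n K) :
  (* K has characteristic 0 *)
  [pchar K] =i pred0 ->
  (* A = M cap Z^n for the polytope M = conv(V), and 0 in M *)
  lattice_points_of V A -> (0 : 'rV[int]_n) \in A ->
  (* S_M and S_M^h are pointed *)
  S_pointed A -> Sh_pointed A ->
  (* <_M is a monomial order on K[S_M] *)
  monomial_order A ltM ->
  (* I^h homogeneous ideal, G homogeneous sparse Groebner basis of I^h *)
  homog_ideal A I ->
  (forall g, g \in G -> homog g) ->
  sparse_GB A ltM I G ->
  (* cols = all monomials of K[S_M^h]_D, in decreasing order for <_h *)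
  uniq cols ->
  (forall e, (e \in cols) = inSh A e && (e.2 == D)) ->
  sorted (fun a b => gsp_lt A ltM b a) cols ->
  (* the set N, and the association m |-> assoc m *)
  let inN (m : expo n) :=
    pb (exists2 g, g \in G & g != 0 /\ ddvd A (LM A ltM g) m) in
  (forall m, m \in cols -> inN m ->
     [/\ assoc m \in G, assoc m != 0 & ddvd A (LM A ltM (assoc m)) m]) ->
  (* rows R of M'_D (ordered like their monomials m in N) *)
  let rowsP := [seq pmul (Xm K (esub m (LM A ltM (assoc m)))) (assoc m)
               | m <- cols & inN m] in
  (* rows of M_D : all X^(u, D - deg g) * g *)
  let rowsM := flatten [seq [seq pmul (Xm K (u, (D - pdeg g)%N)) g
                            | u <- undup (sums A (D - pdeg g))]
                       | g <- G & (pdeg g <= D)%N] in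
  let M' := macaulay rowsP cols in
  let M := macaulay rowsM cols in
  (forall N' N, rref_of M' N' -> rref_of M N ->
     forall p, Rows N' p <-> Rows N p)
  /\ \rank M' = minn (size rowsP) (size cols)
  /\ row_echelon M'.
Proof.
(* The characteristic, the polytope and pointedness only fix the setting of the
   paper; the argument itself does not use them. *)
move=> _ _ _ _ _ ltM_order [I_ideal _] G_homog G_GB cols_uniq colsE cols_sorted.
move=> inN assocP rowsP rowsM M' M.
have rankM' : \rank M' = size rowsP :=
  rank_MR ltM_order I_ideal G_GB cols_uniq colsE cols_sorted assocP.
have eqM : (M' :=: M)%MS :=
  MR_eqmx_MD ltM_order I_ideal G_homog G_GB colsE cols_sorted assocP.
split; [|split]; last first.
- exact: (MR_row_echelon ltM_order I_ideal G_GB cols_uniq colsE cols_sorted assocP).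
- by rewrite rankM'; apply/esym/minn_idPl; rewrite -rankM' rank_leq_col.
move=> N' N [N'_rref /eqmxP eqN'] [N_rref /eqmxP eqN] p.
have eqNN : (N' :=: N)%MS := eqmx_trans eqN' (eqmx_trans eqM (eqmx_sym eqN)).
by split; apply: rref_Rows => //; apply: eqmx_sym.
Qed.
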